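(* Consider the preference robust optimization problem $$\text{(PRO)}\qquad \max_{\bm z\in Z}\ \min_{\bm v\in\mathcal V}\ \frac1K\sum_{k=1}^K(\bm R\bm v)^\top\bm g(\bm z^\top\bm\xi^k),$$ i.e. $\max_{\bm z\in Z}\min_{u\in\mathcal U}\mathbb E[u(\bm z^\top\bm\xi)]$ where $\bm\xi$ takes the values $\bm\xi^k$ each with probability $1/K$ and $\mathcal U:=\{u(\cdot)=(\bm R\bm v)^\top\bm g(\cdot):\bm v\in\mathcal V\}$. For variables $\bm z\in Z$, $\bm\lambda\in\mathbb R^{N-1}$, $\bm\eta\in\mathbb R^M$, $\bm y^k\in\mathbb R^{N-1}$, $\bm w^k\in\{0,1\}^{N-1}$ ($k=1,\dots,K$), put $\bm s:=\frac1K\sum_{k=1}^K(\bm P\bm y^k+\bm Q\bm w^k)+\sum_{m=1}^M\eta_m h_m\bm\Delta^m\in\mathbb R^{N-1}$. Then the optimal value of (PRO) equals the optimal value of the mixed-integer linear program $$\max\ \{\bm s\}_{N-1}-\bm\lambda^\top\bm b$$ subject to $\{\bm s\}_{[N-2]}-\{\bm s\}_{N-1}\bm e+\bm A^\top\bm\lambda=\bm 0$; $x_jw^k_j-y^k_j\le0$, $x_{j+1}w^k_j-y^k_j\ge0$, $w^k_j\in\{0,1\}$ for $j=1,\dots,N-1$, $k=1,\dots,K$; $\sum_{j=1}^{N-1}w^k_j=1$ and $\sum_{j=1}^{N-1}y^k_j=\bm z^\top\bm\xi^k$ for $k=1,\dots,K$; $\bm z\in Z$, $\bm\lambda\ge\bm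 0$, $\bm\eta\ge\bm 0$.
   Context: Let $N\ge3$ be an integer and $\underline x=x_1<x_2<\cdots<x_N=\bar x$ real numbers; $\bm e$ denotes the all-ones vector of the appropriate dimension. Define $\bm g:[\underline x,\bar x]\to\mathbb R^{N-1}$ by $\bm g(x_1)=\bm 0$ and, for $x\in(x_i,x_{i+1}]$ ($i\in\{1,\dots,N-1\}$), $\bm g(x)=(1,\dots,1,\frac{x-x_i}{x_{i+1}-x_i},0,\dots,0)$ with the first $i-1$ entries equal to $1$, the $i$-th entry $\frac{x-x_i}{x_{i+1}-x_i}$ and the last $N-1-i$ entries $0$. For $\bm v\in\mathbb R^{N-2}$ let $\bm R\bm v:=(v_1,\dots,v_{N-2},1-\bm e^\top\bm v)\in\mathbb R^{N-1}$. For a vector $\bm a\in\mathbb R^{N-1}$, $\{\bm a\}_{N-1}$ denotes its last component and $\{\bm a\}_{[N-2]}$ the vector of its first $N-2$ components. Let $\bm P\in\mathbb R^{(N-1)\times(N-1)}$ be diagonal with entries $\bm P_{jj}=1/(x_{j+1}-x_j)$, and $\bm Q\in\mathbb R^{(N-1)\times(N-1)}$ upper triangular with $\bm Q_{jj}=-x_j/(x_{j+1}-x_j)$, $\bm Q_{jl}=1$ for $l>j$, and $\bm Q_{jl}=0$ for $l<j$. Let $\bm A\in\mathbb R^{(N-1)\times(N-2)}$ have first row $\bm e^\top$ and, for $j=2,\dots,N-1$, $j$-th row equal to minus the $(j-1)$-th standard unit vector of $\mathbb R^{N-2}$; let $\bm b=(1,0,\dots,0)\in\mathbb R^{N-1}$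 (so $\bm A\bm v\le\bm b$ means $\bm v\ge0$, $\bm e^\top\bm v\le1$). Let $M\ge1$ and, for $m=1,\dots,M$, let $r_1^m\le r_3^m$ and $r_2^m$ lie in $[\underline x,\bar x]$, $p^m\in[0,1]$, $h_m\in\{-1,1\}$, and put $\bm\Delta^m:=(1-p^m)\bm g(r_1^m)+p^m\bm g(r_3^m)-\bm g(r_2^m)$. Let $\mathcal V:=\{\bm v\in\mathbb R^{N-2}:\bm A\bm v\le\bm b,\ h_m(\bm R\bm v)^\top\bm\Delta^m\le0,\ m=1,\dots,M\}$. Let $Z\subset\mathbb R^n$ be compact and convex, and $\bm\xi^1,\dots,\bm\xi^K\in\mathbb R^n$ with $\bm z^\top\bm\xi^k\in[\underline x,\bar x]$ for all $\bm z\in Z$ and all $k$. *)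

From HB Require Import structures.
From mathcomp Require Import all_boot all_order all_algebra.
From mathcomp Require Import all_classical all_reals all_analysis.
Set Implicit Arguments. Unset Strict Implicit. Unset Printing Implicit Defensive.
Import Order.TTheory GRing.Theory Num.Theory.
Import numFieldNormedType.Exports.
Local Open Scope classical_set_scope.
Local Open Scope ring_scope.

(* Conventions: vectors of R^{N-1}, R^{N-2}, R^M, breakpoints x_1..x_N,
   etc. are represented by functions nat -> R, indexed from 1 as in the
   paper; only the indices in the relevant range are ever used. *)

Section Defs.
Variable R : realType.

Definition dotn (d : nat) (a b : nat -> R) : R := \sum_(1 <= j < d.+1) a j * b j.

Definition gvec (x : nat -> R) (t : R) : nat -> R := fun j =>
  if t <= x j then 0
  else if t <= x j.+1 then (t - x j) / (x j.+1 - x j)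
  else 1.

Definition Rmap (N : nat) (v : nat -> R) : nat -> R := fun j =>
  if (j < N.-1)%N then v j else 1 - \sum_(1 <= l < N.-1) v l.

Definition Amat (j l : nat) : R :=
  if j == 1%N then 1 else if l == j.-1 then -1 else 0.
Definition bvec (j : nat) : R := if j == 1%N then 1 else 0.

Definition Pmat (x : nat -> R) (j l : nat) : R :=
  if l == j then 1 / (x j.+1 - x j) else 0.
Definition Qmat (x : nat -> R) (j l : nat) : R :=
  if l == j then - x j / (x j.+1 - x j) else if (j < l)%N then 1 else 0.

Definition mulmv (cols : nat) (A : nat -> nat -> R) (v : nat -> R) : nat -> R :=
  fun j => \sum_(1 <= l < cols.+1) A j l * v l.
Definition mulmtv (rows : nat) (A : nat -> nat -> R) (v : nat -> R) : nat -> R :=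
  fun l => \sum_(1 <= j < rows.+1) A j l * v j.

Definition Delta (x : nat -> R) (r1 r2 r3 p : nat -> R) (m : nat) : nat -> R :=
  fun j => (1 - p m) * gvec x (r1 m) j + p m * gvec x (r3 m) j - gvec x (r2 m) j.

Definition Vset (N M : nat) (x r1 r2 r3 p h : nat -> R) : set (nat -> R) :=
  [set v | (forall j, (1 <= j <= N.-1)%N -> mulmv N.-2 Amat v j <= bvec j) /\
           (forall m, (1 <= m <= M)%N ->
              h m * dotn N.-1 (Rmap N v) (Delta x r1 r2 r3 p m) <= 0)].

Definition rdot (n : nat) (z xi : 'rV[R]_n) : R := \sum_(i < n) z ord0 i * xi ord0 i.

Definition pro_obj (N K n : nat) (x : nat -> R) (xi : nat -> 'rV[R]_n)
  (z : 'rV[R]_n) (v : nat -> R) : R :=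
  K%:R^-1 * \sum_(1 <= k < K.+1) dotn N.-1 (Rmap N v) (gvec x (rdot z (xi k))).

Definition pro_value (N M K n : nat) (x r1 r2 r3 p h : nat -> R)
  (Z : set 'rV[R]_n) (xi : nat -> 'rV[R]_n) : \bar R :=
  ereal_sup [set ereal_inf [set (pro_obj N K x xi z v)%:E
                           | v in Vset N M x r1 r2 r3 p h] | z in Z].

Definition svec (N M K : nat) (x r1 r2 r3 p h : nat -> R)
  (eta : nat -> R) (y w : nat -> nat -> R) : nat -> R := fun j =>
  K%:R^-1 * \sum_(1 <= k < K.+1)
     (mulmv N.-1 (Pmat x) (y k) j + mulmv N.-1 (Qmat x) (w k) j)
  + \sum_(1 <= m < M.+1) eta m * h m * Delta x r1 r2 r3 p m j.

Definition milp_feasible (N M K n : nat) (x r1 r2 r3 p h : nat -> R)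
  (Z : set 'rV[R]_n) (xi : nat -> 'rV[R]_n)
  (z : 'rV[R]_n) (lam eta : nat -> R) (y w : nat -> nat -> R) : Prop :=
  let s := svec N M K x r1 r2 r3 p h eta y w in
  (forall j, (1 <= j <= N.-2)%N ->
     s j - s N.-1 + mulmtv N.-1 Amat lam j = 0) /\
  (forall k j, (1 <= k <= K)%N -> (1 <= j <= N.-1)%N ->
     [/\ x j * w k j - y k j <= 0, x j.+1 * w k j - y k j >= 0
       & (w k j = 0 \/ w k j = 1)]) /\
  (forall k, (1 <= k <= K)%N ->
     \sum_(1 <= j < N) w k j = 1 /\ \sum_(1 <= j < N) y k j = rdot z (xi k)) /\
  z \in Z /\
  (forall j, (1 <= j <= N.-1)%N -> 0 <= lam j) /\
  (forall m, (1 <= m <= M)%N -> 0 <= eta m).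

Definition milp_obj (N M K : nat) (x r1 r2 r3 p h : nat -> R)
  (lam eta : nat -> R) (y w : nat -> nat -> R) : R :=
  svec N M K x r1 r2 r3 p h eta y w N.-1 - dotn N.-1 lam bvec.

Definition milp_value (N M K n : nat) (x r1 r2 r3 p h : nat -> R)
  (Z : set 'rV[R]_n) (xi : nat -> 'rV[R]_n) : \bar R :=
  ereal_sup [set e | exists (z : 'rV[R]_n) (lam eta : nat -> R)
                             (y w : nat -> nat -> R),
     milp_feasible N M K x r1 r2 r3 p h Z xi z lam eta y w /\
     e = (milp_obj N M K x r1 r2 r3 p h lam eta y w)%:E].
End Defs.

Definition convex_rV (R : realType) (n : nat) (Z : set 'rV[R]_n) : Prop :=
  forall a b t, Z a -> Z b -> 0 <= t <= 1 -> Z (t *: a + (1 - t) *: b).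

(* For fixed z the inner minimisation of (PRO) is a linear program in v, and
   LP duality turns it into the maximisation, over multipliers lam, eta >= 0
   satisfying the equality constraint of the MILP, of {s}_{N-1} - lam^T b,
   where s = E[g(z^T xi)] + sum_m eta_m h_m Delta^m.  Strong duality (from
   Farkas' lemma, proved by Fourier-Motzkin elimination) applies because the
   dual is always feasible: without the preference constraints V is a simplex.
   The binary variables describe g: for t = z^T xi^k the constraints force w^k
   to pick a segment [x_i, x_{i+1}] containing t and y^k = t e_i, and then
   P y^k + Q w^k = g(t).  Maximising jointly over z gives the MILP. *)

From HB Require Import structures.
From mathcomp Require Import all_boot all_order all_algebra.
From mathcomp Require Import all_classical all_reals all_analysis.
From mathcomp Require Import ring lra.
Import Order.TTheory GRing.Theory Num.Theory.
Import numFieldNormedType.Exports.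
Local Open Scope classical_set_scope.
Local Open Scope ring_scope.
Set Implicit Arguments.
Unset Strict Implicit.

Lemma exists_between (R : realDomainType) (l u : seq R) :
  (forall a b, a \in l -> b \in u -> a <= b) ->
  exists t, (forall a, a \in l -> a <= t) /\ (forall b, b \in u -> t <= b).
Proof.
elim: l => [|a0 l IH] lu.
  elim: u {lu} => [|b0 u [t [_ tu]]]; first by exists 0.
  exists (Num.min b0 t); split=> // b; rewrite inE => /orP[/eqP->|bu].
    by rewrite ge_min lexx.
  by rewrite ge_min tu ?orbT.
have [t [lt tu]] : exists t, (forall a, a \in l -> a <= t) /\ (forall b, b \in u -> t <= b).
  by apply: IH => a b al bu; apply: lu; rewrite ?inE ?al ?orbT.
exists (Num.max a0 t); split.
  by move=> a; rewrite inE => /orP[/eqP->|/lt alt]; rewrite le_max ?lexx ?alt ?orbT.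
by move=> b bu; rewrite ge_max tu // andbT; apply: lu; rewrite ?inE ?eqxx.
Qed.

Lemma sum_nat_single (V : nmodType) (m n i : nat) (G : nat -> V) : (m <= i < n)%N ->
  (forall l, (m <= l < n)%N -> l != i -> G l = 0) -> \sum_(m <= l < n) G l = G i.
Proof.
move=> i_mn G0; rewrite (bigD1_seq i) ?mem_index_iota ?iota_uniq //= big1_seq ?addr0 //.
by move=> l /andP[li]; rewrite mem_index_iota => /G0 ->.
Qed.

Lemma forall_ord_succ (m : nat) (P : nat -> Prop) :
  (forall j : 'I_m, P j.+1) -> forall j, (1 <= j <= m)%N -> P j.
Proof. by move=> P_ord [//|j] /= j_m; exact: P_ord (Ordinal j_m). Qed.

Lemma sum_ord_succ (V : nmodType) (m : nat) (F : nat -> V) :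
  \sum_(j < m) F j.+1 = \sum_(1 <= j < m.+1) F j.
Proof. by rewrite big_add1 /= big_mkord. Qed.

Section FourierMotzkin.
Variable R : realFieldType.

Section Elimination.
Variables (I : finType) (al : I -> R).

(* Eliminating a variable with coefficients [al]: the constraints of the new
   system are those with [al i = 0] and, for each pair (i, k) with
   [al i > 0 > al k], the positive combination in which the variable cancels. *)
Definition fm_comb (F : I -> R) (i' : I + I * I) : R :=
  match i' with
  | inl i => if al i == 0 then F i else 0
  | inr (i, k) => if (0 < al i) && (al k < 0) then - al k * F i + al i * F k else 0
  end.

Definition fm_lift (y' : I + I * I -> R) (i : I) : R :=
  (if al i == 0 then y' (inl i) else 0)
  + \sum_k (if (0 < al i) && (al k < 0) then y' (inr (i, k)) * - al k else 0)
  + \sum_k (if (0 < al k) && (al i < 0) then y' (inr (k, i)) * al k else 0).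

Lemma fm_lift_ge0 y' : (forall i', 0 <= y' i') -> forall i, 0 <= fm_lift y' i.
Proof.
move=> y'_ge0 i; apply: addr_ge0; first apply: addr_ge0.
- by case: ifP.
- apply: sumr_ge0 => k _; case: ifP => // /andP[_ ak].
  by apply: mulr_ge0 => //; rewrite oppr_ge0 ltW.
- by apply: sumr_ge0 => k _; case: ifP => // /andP[ak _]; apply: mulr_ge0 => //; rewrite ltW.
Qed.

Lemma sum_fm_lift y' F : \sum_i fm_lift y' i * F i = \sum_i' y' i' * fm_comb F i'.
Proof.
pose pos i k := (0 < al i) && (al k < 0).
rewrite big_sumType /=.
rewrite (eq_bigr (fun p : I * I => y' (inr (p.1, p.2)) * fm_comb F (inr (p.1, p.2))))
  => [|[]//].
rewrite -(pair_bigA _ (fun i k => y' (inr (i, k)) * fm_comb F (inr (i, k)))).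
have -> : \sum_i \sum_k y' (inr (i, k)) * fm_comb F (inr (i, k)) =
   \sum_i \sum_k (if pos i k then y' (inr (i, k)) * - al k else 0) * F i
 + \sum_i \sum_k (if pos k i then y' (inr (k, i)) * al k else 0) * F i.
  rewrite (exchange_big _ _ _ _ _ (fun i k => (if pos k i then _ else 0) * F i)) /=.
  rewrite -big_split; apply: eq_bigr => i _; rewrite -big_split; apply: eq_bigr => k _ /=.
  by rewrite /pos; case: ifP => _; rewrite ?mul0r ?mulr0 ?addr0 // mulrDr !mulrA.
rewrite addrA -!big_split; apply: eq_bigr => i _.
rewrite /fm_lift !mulrDl !mulr_suml; congr (_ + _ + _).
by case: ifP => _; rewrite ?mul0r ?mulr0.
Qed.

Lemma fm_comb_id i' : fm_comb al i' = 0.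
Proof.
case: i' => [i|[i k]] /=; first by case: ifP => // /eqP.
by case: ifP => // _; rewrite mulrC mulrN addNr.
Qed.

Lemma fm_comb_affine (r : seq nat) (A : I -> nat -> R) (v : nat -> R) (B : I -> R) i' :
  fm_comb (fun i => \sum_(l <- r) A i l * v l + B i) i' =
  \sum_(l <- r) fm_comb (A^~ l) i' * v l + fm_comb B i'.
Proof.
have sum0 : \sum_(l <- r) 0 * v l = 0 by rewrite big1 // => l _; rewrite mul0r.
case: i' => [i|[i k]] /=; case: ifP => _; rewrite ?sum0 ?addr0 //.
rewrite !mulrDr addrACA; congr (_ + _).
by rewrite !mulr_sumr -big_split; apply: eq_bigr => l _; rewrite mulrDl !mulrA.
Qed.

Lemma fm_extend (F : I -> R) : (forall i', 0 <= fm_comb F i') ->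
  exists t, forall i, 0 <= F i + al i * t.
Proof.
move=> F_ge0.
pose lo := [seq - F i / al i | i <- enum I & 0 < al i].
pose up := [seq F k / - al k | k <- enum I & al k < 0].
have [t [lo_t t_up]] : exists t,
    (forall a, a \in lo -> a <= t) /\ (forall b, b \in up -> t <= b).
  apply: exists_between => _ _ /mapP[i + ->] /mapP[k + ->].
  rewrite !mem_filter => /andP[ai _] /andP[ak _].
  have := F_ge0 (inr (i, k)); rewrite /= ai ak /= => Fik.
  rewrite ler_pdivlMr ?oppr_gt0 // mulrAC ler_pdivrMr //; nra.
exists t => i; case: (ltgtP (al i) 0) => ai.
- have : F i / - al i \in up by apply/mapP; exists i; rewrite // mem_filter ai mem_enum.
  move/t_up; rewrite ler_pdivlMr ?oppr_gt0 //; nra.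
- have : - F i / al i \in lo by apply/mapP; exists i; rewrite // mem_filter ai mem_enum.
  move/lo_t; rewrite ler_pdivrMr //; nra.
- by have := F_ge0 (inl i); rewrite /= ai eqxx mul0r addr0.
Qed.
End Elimination.

Lemma farkas (d : nat) (I : finType) (a : I -> nat -> R) (b : I -> R) :
  (forall y : I -> R, (forall i, 0 <= y i) ->
     (forall l, (1 <= l <= d)%N -> \sum_i y i * a i l = 0) ->
     0 <= \sum_i y i * b i) ->
  exists v : nat -> R, forall i, 0 <= \sum_(1 <= l < d.+1) a i l * v l + b i.
Proof.
elim: d I a b => [|d IH] I a b farkas_cond.
  exists (fun=> 0) => i; rewrite big_geq // add0r.
  have := farkas_cond (fun j => (j == i)%:R); rewrite (bigD1 i) //= eqxx mul1r.
  rewrite big1 ?addr0 => [|j /negbTE->]; last by rewrite mul0r.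
  by apply=> [j|[|l] /andP[]//]; rewrite ler0n.
pose al i := a i d.+1.
have [v' v'_sol] : exists v' : nat -> R, forall i', 0 <=
    \sum_(1 <= l < d.+1) fm_comb al (a^~ l) i' * v' l + fm_comb al b i'.
  apply: IH => y' y'_ge0 y'_a; rewrite -sum_fm_lift.
  apply: farkas_cond => [|l /andP[l1]]; first exact: fm_lift_ge0.
  rewrite sum_fm_lift leq_eqVlt ltnS => /orP[/eqP->|ld].
    by rewrite big1 // => i' _; rewrite fm_comb_id mulr0.
  by apply: y'_a; rewrite l1 ld.
have [t t_sol] : exists t, forall i,
    0 <= \sum_(1 <= l < d.+1) a i l * v' l + b i + al i * t.
  by apply: fm_extend => i'; rewrite fm_comb_affine.
exists (fun l => if (l <= d)%N then v' l else t) => i.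
rewrite big_nat_recr //= ltnn addrAC.
rewrite (eq_big_nat _ _ (F2 := fun l => a i l * v' l)) => [|l /andP[_ ld]].
  exact: t_sol.
by rewrite -ltnS ld.
Qed.
End FourierMotzkin.

Section LPDuality.
Variables (R : realFieldType) (I : finType) (d : nat).
Variables (a : I -> nat -> R) (b : I -> R) (c0 : R) (c : nat -> R).

Definition lp_feasible (v : nat -> R) :=
  forall i, 0 <= \sum_(1 <= l < d.+1) a i l * v l + b i.
Definition lp_obj (v : nat -> R) := c0 + \sum_(1 <= l < d.+1) c l * v l.
Definition dual_feasible (y : I -> R) :=
  (forall i, 0 <= y i) /\ forall l, (1 <= l <= d)%N -> \sum_i y i * a i l = c l.
Definition dual_obj (y : I -> R) := c0 - \sum_i y i * b i.

Lemma lp_weak_duality v y : lp_feasible v -> dual_feasible y -> dual_obj y <= lp_obj v.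
Proof.
move=> v_feas [y_ge0 y_a]; rewrite /dual_obj /lp_obj.
have : 0 <= \sum_i y i * (\sum_(1 <= l < d.+1) a i l * v l + b i).
  by apply: sumr_ge0 => i _; rewrite mulr_ge0.
have -> : \sum_(1 <= l < d.+1) c l * v l =
          \sum_i y i * \sum_(1 <= l < d.+1) a i l * v l.
  under [RHS]eq_bigr do rewrite mulr_sumr.
  rewrite exchange_big /=; apply: eq_big_nat => l /y_a <-.
  by rewrite mulr_suml; apply: eq_bigr => i _; rewrite mulrA.
under eq_bigr do rewrite mulrDr.
rewrite big_split /=; lra.
Qed.

Lemma ge0_perturbed (S T : R) : (forall e, 0 < e -> 0 <= S + e * T) -> 0 <= S.
Proof.
move=> ST; have [T_le0|T_gt0] := leP T 0.
  by have := ST 1 ltr01; rewrite mul1r; lra.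
rewrite -oppr_le0; apply/ler_addgt0Pr => e e_gt0.
by have := ST (e / T) (divr_gt0 e_gt0 T_gt0); rewrite divfK ?gt_eqF //; lra.
Qed.

Lemma lp_strong_duality y0 D : dual_feasible y0 ->
  (forall y, dual_feasible y -> dual_obj y <= D) ->
  exists2 v, lp_feasible v & lp_obj v <= D.
Proof.
move=> [y0_ge0 y0_a] dual_le.
pose a' (i : I + 'I_1) l := if i is inl i then a i l else - c l.
pose b' (i : I + 'I_1) := if i is inl i then b i else D - c0.
have [v v_sol] : exists v, forall i, 0 <= \sum_(1 <= l < d.+1) a' i l * v l + b' i.
  apply: farkas => y' y'_ge0 y'_a; rewrite big_sumType big_ord1 /=.
  set mu := y' (inr ord0).
  have y_a l : (1 <= l <= d)%N -> \sum_i y' (inl i) * a i l = mu * c l.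
    by move=> /y'_a; rewrite big_sumType big_ord1 /= mulrN => /eqP; rewrite subr_eq0 => /eqP.
  (* [mu] may vanish: perturbing towards [y0] keeps the normalised multipliers
     (y + e y0) / (mu + e) dual feasible for every e > 0. *)
  apply: (ge0_perturbed (T := D - c0 + \sum_i y0 i * b i)) => e e_gt0.
  have mue_gt0 : 0 < mu + e by have : 0 <= mu := y'_ge0 _; lra.
  pose ye i := (y' (inl i) + e * y0 i) / (mu + e).
  have sum_ye (F : I -> R) : \sum_i ye i * F i =
      (\sum_i y' (inl i) * F i + e * \sum_i y0 i * F i) / (mu + e).
    rewrite mulrDl -mulrA !mulr_suml mulr_sumr -big_split /=.
    by apply: eq_bigr => i _; rewrite /ye; ring.
  have ye_feas : dual_feasible ye.
    split=> [i|l l_d]; last by rewrite sum_ye y_a // y0_a //; field; rewrite gt_eqF.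
    by rewrite /ye divr_ge0 ?addr_ge0 ?mulr_ge0 ?y'_ge0 ?y0_ge0 ?ltW.
  have := dual_le _ ye_feas; rewrite /dual_obj sum_ye => ye_le.
  have : (c0 - D) * (mu + e) <= \sum_i y' (inl i) * b i + e * \sum_i y0 i * b i.
    by rewrite -ler_pdivlMr //; lra.
  nra.
exists v => [i|]; first exact: v_sol (inl i).
have := v_sol (inr ord0); rewrite /lp_obj /=.
under eq_bigr do rewrite mulNr; rewrite sumrN; lra.
Qed.

End LPDuality.

Lemma lp_duality (R : realType) (I : finType) (d : nat)
    (a : I -> nat -> R) (b : I -> R) (c0 : R) (c : nat -> R) y0 :
  dual_feasible d a c y0 ->
  ereal_inf [set (lp_obj d c0 c v)%:E | v in lp_feasible d a b] =
  ereal_sup [set (dual_obj b c0 y)%:E | y in dual_feasible d a c].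
Proof.
move=> y0_feas; apply/eqP; rewrite eq_le; apply/andP; split; last first.
  apply: ge_ereal_sup => _ [y y_feas <-]; apply: le_ereal_inf_tmp => _ [v v_feas <-].
  by rewrite lee_fin (lp_weak_duality c0 v_feas y_feas).
have S_ub y : dual_feasible d a c y ->
    ((dual_obj b c0 y)%:E <=
     ereal_sup [set (dual_obj b c0 y)%:E | y in dual_feasible d a c])%E.
  by move=> y_feas; apply: ereal_sup_ubound; exists y.
have := S_ub _ y0_feas; move: S_ub; case: ereal_sup => [D S_ub _|_ _|//]; last exact: leey.
have [v v_feas v_le] : exists2 v, lp_feasible d a b v & lp_obj d c0 c v <= D.
  by apply: (lp_strong_duality y0_feas) => y /S_ub; rewrite lee_fin.
by apply: ge_ereal_inf; exists (lp_obj d c0 c v)%:E; [exists v | rewrite lee_fin].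
Qed.

Lemma dotn_Rmap (R : realType) (d : nat) (v u : nat -> R) :
  dotn d.+1 (Rmap d.+2 v) u = u d.+1 + \sum_(1 <= l < d.+1) (u l - u d.+1) * v l.
Proof.
rewrite /dotn big_nat_recr //= /Rmap ltnn.
rewrite (eq_big_nat _ _ (F2 := fun l => v l * u l)) => [|l /andP[_ ->]//].
have -> : \sum_(1 <= l < d.+1) (u l - u d.+1) * v l =
    \sum_(1 <= l < d.+1) v l * u l - (\sum_(1 <= l < d.+1) v l) * u d.+1.
  by rewrite mulr_suml -sumrB; apply: eq_bigr => l _; ring.
ring.
Qed.

Lemma mulmtv_Amat (R : realType) (r l : nat) (lam : nat -> R) : (1 <= l < r)%N ->
  mulmtv r (@Amat R) lam l = lam 1%N - lam l.+1.
Proof.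
move=> /andP[l1 lr]; rewrite /mulmtv big_ltn; last by rewrite ltnS (leq_trans l1 (ltnW lr)).
rewrite {1}/Amat eqxx mul1r big_add1 /= (sum_nat_single (i := l)) ?l1 //.
  by rewrite /Amat gtn_eqF // eqxx mulN1r.
by move=> j /andP[j1 _] jl; rewrite /Amat gtn_eqF //= eq_sym (negbTE jl) mul0r.
Qed.

Section SegmentEncoding.
Variables (R : realType) (k : nat) (x : nat -> R).

Lemma segment_exists t : x 1%N <= t <= x k.+2 ->
  exists2 i, (1 <= i <= k.+1)%N & x i <= t <= x i.+1.
Proof.
suff seg m : (1 <= m)%N -> x 1%N <= t <= x m.+1 ->
    exists2 i, (1 <= i <= m)%N & x i <= t <= x i.+1 by exact: seg.
elim: m => [//|[|m] IH] _ /andP[t_ge t_le]; first by exists 1%N; rewrite ?t_ge.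
have [t_le'|t_gt] := leP t (x m.+2); last by exists m.+2; rewrite ?leqnn ?(ltW t_gt).
have [i /andP[i1 im] t_i] := IH isT (introT andP (conj t_ge t_le')).
by exists i; rewrite // i1 leqW.
Qed.

Hypothesis x_incr : forall i, (1 <= i <= k.+1)%N -> x i < x i.+1.

Lemma x_le i j : (1 <= i)%N -> (i <= j <= k.+2)%N -> x i <= x j.
Proof.
move=> i1 /andP[ij]; rewrite -(subnK ij).
elim: (j - i)%N => [|m IH] jk; first by rewrite add0n.
rewrite addSn in jk *; apply: le_trans (IH (ltnW jk)) (ltW (x_incr _)).
by rewrite (leq_trans i1 (leq_addl _ _)) -ltnS.
Qed.

Definition segment_encoding (t : R) (y w : nat -> R) : Prop :=
  (forall j, (1 <= j <= k.+1)%N ->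
     [/\ x j * w j - y j <= 0, x j.+1 * w j - y j >= 0 & (w j = 0 \/ w j = 1)]) /\
  \sum_(1 <= j < k.+2) w j = 1 /\ \sum_(1 <= j < k.+2) y j = t.

Lemma gvec_segment i t j : (1 <= i <= k.+1)%N -> (1 <= j <= k.+1)%N ->
  x i <= t <= x i.+1 ->
  gvec x t j = if (j < i)%N then 1 else if j == i then (t - x i) / (x i.+1 - x i) else 0.
Proof.
move=> /andP[i1 ik] /andP[j1 jk] /andP[t_ge t_le]; rewrite /gvec.
have xj_lt := x_incr (introT andP (conj j1 jk)).
have dx_neq0 : x j.+1 - x j != 0 by rewrite subr_eq0 gt_eqF.
case: (ltngtP j i) => [ji|ij|->].
- have : x j.+1 <= t by apply: le_trans t_ge; apply: x_le; rewrite // ji leqW.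
  case: ifP => [|_ t_ge']; first lra.
  case: ifP => // t_le'; have -> : t = x j.+1 by lra.
  by rewrite divff.
- have : t <= x j by apply: le_trans t_le _; apply: x_le; rewrite // ij leqW.
  by move=> ->.
- case: ifP => [t_x|_]; last by rewrite t_le.
  have -> : t = x i by lra.
  by rewrite subrr mul0r.
Qed.

Lemma PQ_indicator i t j : (1 <= i <= k.+1)%N -> (1 <= j <= k.+1)%N ->
  mulmv k.+1 (Pmat x) (fun l => (l == i)%:R * t) j
    + mulmv k.+1 (Qmat x) (fun l => (l == i)%:R) j =
  if (j < i)%N then 1 else if j == i then (t - x i) / (x i.+1 - x i) else 0.
Proof.
move=> i_k j_k; rewrite /mulmv (sum_nat_single (i := j)) ?(sum_nat_single (i := i)) //;
  first last.
- by move=> l _ /negbTE lj; rewrite /Pmat lj mul0r.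
- by move=> l _ /negbTE li; rewrite li mulr0.
rewrite /Pmat /Qmat !eqxx mulr1 eq_sym.
by case: (ltngtP j i) => [ji|ij|->]; rewrite ?mul0r ?mulr0 ?add0r ?mul1r //; ring.
Qed.

Lemma segment_encoding_indicator t y w : segment_encoding t y w ->
  exists2 i, (1 <= i <= k.+1)%N & [/\ x i <= t <= x i.+1,
    forall j, (1 <= j <= k.+1)%N -> w j = (j == i)%:R
  & forall j, (1 <= j <= k.+1)%N -> y j = (j == i)%:R * t].
Proof.
move=> [cons [sum_w sum_y]].
have w_ge0 j : (1 <= j <= k.+1)%N -> 0 <= w j by case/cons => _ _ [->|->]; rewrite ?ler01.
have [i i_k wi] : exists2 i, (1 <= i <= k.+1)%N & w i = 1.
  have [/hasP[i]|/hasPn w_ne1] := boolP (has (fun j => w j == 1) (index_iota 1 k.+2)).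
    by rewrite mem_index_iota => i_k /eqP wi; exists i.
  move: sum_w; rewrite big_seq big1 => [/esym/eqP|j j_k]; first by rewrite oner_eq0.
  have /w_ne1 := j_k; rewrite mem_index_iota in j_k.
  by case: (cons j j_k) => _ _ [->|->]; rewrite ?eqxx.
have others0 : \sum_(l <- index_iota 1 k.+2 | l != i) w l = 0.
  by move: sum_w; rewrite (bigD1_seq i) ?mem_index_iota ?iota_uniq //= wi; lra.
have w_other j : (1 <= j <= k.+1)%N -> j != i -> w j = 0.
  move: others0 => /eqP; rewrite big_seq_cond psumr_eq0 => [/allP w0 j_k ji|l /andP[]].
    by move: (w0 j); rewrite mem_index_iota j_k ji /= => /(_ isT) /eqP.
  by rewrite mem_index_iota => /w_ge0.
have y_other j : (1 <= j <= k.+1)%N -> j != i -> y j = 0.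
  by move=> j_k ji; case: (cons j j_k); rewrite w_other // !mulr0; lra.
have yi : y i = t by rewrite -sum_y (sum_nat_single (i := i)) // => j j_k /y_other ->.
exists i => //; split=> [|j j_k|j j_k].
- by case: (cons i i_k); rewrite wi yi !mulr1 => ? ? _; apply/andP; split; lra.
- by case: eqVneq => [->|ji]; rewrite /= ?wi ?w_other.
- by case: eqVneq => [->|ji]; rewrite /= ?mul1r ?mul0r ?yi ?y_other.
Qed.

Lemma segment_encoding_gvec t y w : segment_encoding t y w ->
  forall j, (1 <= j <= k.+1)%N ->
  mulmv k.+1 (Pmat x) y j + mulmv k.+1 (Qmat x) w j = gvec x t j.
Proof.
move=> /segment_encoding_indicator[i i_k [t_i w_i y_i]] j j_k.
rewrite (gvec_segment i_k j_k t_i) -PQ_indicator // /mulmv.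
by congr (_ + _); apply: eq_big_nat => l l_k; rewrite ?w_i ?y_i.
Qed.

Lemma segment_encoding_exists t : x 1%N <= t <= x k.+2 ->
  exists y w, segment_encoding t y w.
Proof.
move=> /segment_exists[i i_k /andP[t_ge t_le]].
exists (fun j => (j == i)%:R * t), (fun j => (j == i)%:R); split; last split.
- move=> j _; case: eqVneq => [->|_] /=; rewrite ?mul1r ?mul0r ?mulr1 ?mulr0 ?subrr.
    by split; [lra | lra | right].
  by split; [lra | lra | left].
- by rewrite (sum_nat_single (i := i)) ?eqxx // => j _ /negbTE ->.
- by rewrite (sum_nat_single (i := i)) ?eqxx ?mul1r // => j _ /negbTE ->; rewrite mul0r.
Qed.
End SegmentEncoding.

(* Throughout, N = q + 3. *)
Section PreferenceRobustLP.
Variables (R : realType) (q M : nat) (x r1 r2 r3 p h : nat -> R).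
Local Notation Dl m := (Delta x r1 r2 r3 p m).
Local Notation constr := ('I_q.+2 + 'I_M)%type.

Definition Delta_comb (eta : nat -> R) j := \sum_(1 <= m < M.+1) eta m * h m * Dl m j.

(* V as a system [0 <= sum_l V_coef i l * v l + V_const i] in v_1, ..., v_{N-2}:
   [inl j] is row j+1 of [A v <= b], [inr m] the (m+1)-th preference constraint. *)
Definition V_coef (i : constr) l : R :=
  match i with
  | inl j => - Amat R j.+1 l
  | inr m => - (h m.+1 * (Dl m.+1 l - Dl m.+1 q.+2))
  end.

Definition V_const (i : constr) : R :=
  match i with
  | inl j => bvec R j.+1
  | inr m => - (h m.+1 * Dl m.+1 q.+2)
  end.

Definition Rlin (c : nat -> R) l := c l - c q.+2.

Lemma Vset_lp_feasible v :
  Vset q.+3 M x r1 r2 r3 p h v <-> lp_feasible q.+1 V_coef V_const v.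
Proof.
have slack_A j : (0 <= \sum_(1 <= l < q.+2) V_coef (inl j) l * v l + V_const (inl j))
    = (mulmv q.+1 (@Amat R) v j.+1 <= bvec R j.+1).
  by rewrite /= /mulmv; under eq_bigr do rewrite mulNr; rewrite sumrN addrC subr_ge0.
have slack_pref m : (0 <= \sum_(1 <= l < q.+2) V_coef (inr m) l * v l + V_const (inr m))
    = (h m.+1 * dotn q.+2 (Rmap q.+3 v) (Dl m.+1) <= 0).
  rewrite /= dotn_Rmap -[in RHS]oppr_ge0; congr (0 <= _).
  move: (Dl m.+1) (h m.+1) => D hm; rewrite mulrDr opprD addrC mulr_sumr -sumrN.
  by congr (_ + _); apply: eq_bigr => l _; rewrite mulrA mulNr.
split=> [[A_le pref_le] [j|m]|feas]; rewrite ?slack_A ?slack_pref.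
- by apply: A_le; rewrite /= ltn_ord.
- by apply: pref_le; rewrite /= ltn_ord.
split; apply: forall_ord_succ => j; [rewrite -slack_A | rewrite -slack_pref]; exact: feas.
Qed.

Definition dual_vars (lam eta : nat -> R) (i : constr) : R :=
  match i with inl j => lam j.+1 | inr m => eta m.+1 end.

Lemma dual_vars_surj (y : constr -> R) : exists lam eta, y = dual_vars lam eta.
Proof.
exists (fun j => if insub j.-1 is Some o then y (inl o) else 0).
exists (fun m => if insub m.-1 is Some o then y (inr o) else 0).
by apply/funext => -[j|m] /=; rewrite valK.
Qed.

Lemma sum_dual_vars_coef lam eta l : \sum_i dual_vars lam eta i * V_coef i l =
  - mulmtv q.+2 (@Amat R) lam l - (Delta_comb eta l - Delta_comb eta q.+2).
Proof.
rewrite big_sumType /= (sum_ord_succ _ (fun j => lam j * - Amat R j l)).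
rewrite (sum_ord_succ _ (fun m => eta m * - (h m * (Dl m l - Dl m q.+2)))).
rewrite /mulmtv /Delta_comb -sumrB -!sumrN.
by congr (_ + _); apply: eq_bigr => j _; ring.
Qed.

Lemma sum_dual_vars_const lam eta : \sum_i dual_vars lam eta i * V_const i =
  dotn q.+2 lam (@bvec R) - Delta_comb eta q.+2.
Proof.
rewrite big_sumType /= (sum_ord_succ _ (fun j => lam j * bvec R j)).
rewrite (sum_ord_succ _ (fun m => eta m * - (h m * Dl m q.+2))).
rewrite /dotn /Delta_comb -sumrN; congr (_ + _); apply: eq_bigr => m _; ring.
Qed.

Lemma dual_feasible_vars c lam eta :
  dual_feasible q.+1 V_coef (Rlin c) (dual_vars lam eta) <->
  [/\ forall l, (1 <= l <= q.+1)%N -> c l + Delta_comb eta l - (c q.+2 + Delta_comb eta q.+2)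
                                   + mulmtv q.+2 (@Amat R) lam l = 0,
      forall j, (1 <= j <= q.+2)%N -> 0 <= lam j
    & forall m, (1 <= m <= M)%N -> 0 <= eta m].
Proof.
split=> [[ge0 coef]|[coef lam_ge0 eta_ge0]]; first split.
- by move=> l /coef; rewrite sum_dual_vars_coef /Rlin; lra.
- by apply: forall_ord_succ => j; exact: ge0 (inl j).
- by apply: forall_ord_succ => m; exact: ge0 (inr m).
split=> [[j|m]|l /coef]; rewrite ?sum_dual_vars_coef /Rlin; try lra.
- by apply: lam_ge0; rewrite /= ltn_ord.
- by apply: eta_ge0; rewrite /= ltn_ord.
Qed.

Lemma dual_obj_vars c lam eta : dual_obj V_const (c q.+2) (dual_vars lam eta) =
  c q.+2 + Delta_comb eta q.+2 - dotn q.+2 lam (@bvec R).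
Proof. by rewrite /dual_obj sum_dual_vars_const; ring. Qed.

Lemma dual_feasible_exists c : exists y, dual_feasible q.+1 V_coef (Rlin c) y.
Proof.
pose C := \sum_(1 <= l < q.+2) `|c l - c q.+2|.
have C_ge l : (1 <= l < q.+2)%N -> `|c l - c q.+2| <= C.
  move=> l_q; rewrite /C (bigD1_seq l) ?mem_index_iota ?iota_uniq //= lerDl.
  exact: sumr_ge0.
pose lam j := if j == 1%N then C else C + c j.-1 - c q.+2.
exists (dual_vars lam (fun=> 0)); apply/dual_feasible_vars; split=> [l l_q|j j_q|//].
- have DC0 j : Delta_comb (fun=> 0) j = 0.
    by rewrite /Delta_comb big1 // => m _; rewrite !mul0r.
  have /negbTE l1 : l.+1 != 1%N by case: l l_q.
  by rewrite mulmtv_Amat // /lam eqxx l1 !DC0 /=; ring.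
- rewrite /lam; case: eqP => [_|/eqP j1]; first exact: sumr_ge0.
  have /C_ge : (1 <= j.-1 < q.+2)%N by case: j j_q j1 => [|[|j]].
  by rewrite ler_norml; lra.
Qed.

Variables (K n : nat) (Z : set 'rV[R]_n) (xi : nat -> 'rV[R]_n).

Definition mean_g (z : 'rV[R]_n) j :=
  K%:R^-1 * \sum_(1 <= k < K.+1) gvec x (rdot z (xi k)) j.

Definition dual_value (z : 'rV[R]_n) : \bar R :=
  ereal_sup [set (dual_obj V_const (mean_g z q.+2) y)%:E
            | y in dual_feasible q.+1 V_coef (Rlin (mean_g z))].

Lemma pro_obj_lp z v :
  pro_obj q.+3 K x xi z v = lp_obj q.+1 (mean_g z q.+2) (Rlin (mean_g z)) v.
Proof.
rewrite /lp_obj /Rlin -dotn_Rmap /pro_obj /dotn exchange_big_nat /= mulr_sumr.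
by apply: eq_bigr => j _; rewrite -mulr_sumr mulrCA.
Qed.

Lemma inner_min_dual z :
  ereal_inf [set (pro_obj q.+3 K x xi z v)%:E | v in Vset q.+3 M x r1 r2 r3 p h] =
  dual_value z.
Proof.
have [y0 y0_feas] := dual_feasible_exists (mean_g z).
rewrite /dual_value -(lp_duality V_const _ y0_feas); congr ereal_inf.
rewrite (_ : Vset _ _ _ _ _ _ _ _ = lp_feasible q.+1 V_coef V_const).
  by apply: eq_imagel => v _; rewrite pro_obj_lp.
by apply/funext => v; apply/propext; exact: Vset_lp_feasible.
Qed.

Lemma pro_value_dual : pro_value q.+3 M K x r1 r2 r3 p h Z xi = ereal_sup (dual_value @` Z).
Proof. by congr ereal_sup; apply: eq_imagel => z _; exact: inner_min_dual. Qed.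

Hypothesis x_incr : forall i, (1 <= i <= q.+2)%N -> x i < x i.+1.
Hypothesis t_range :
  forall z k, Z z -> (1 <= k <= K)%N -> x 1%N <= rdot z (xi k) <= x q.+3.

Definition encodes_segments (z : 'rV[R]_n) (y w : nat -> nat -> R) :=
  forall k, (1 <= k <= K)%N -> segment_encoding q.+1 x (rdot z (xi k)) (y k) (w k).

Lemma segment_encodings_exist z : Z z -> exists y w, encodes_segments z y w.
Proof.
move=> Zz; have /choice[yw yw_enc] : forall k, exists yw : (nat -> R) * (nat -> R),
    (1 <= k <= K)%N -> segment_encoding q.+1 x (rdot z (xi k)) yw.1 yw.2.
  move=> k; have [k_K|_] := boolP (1 <= k <= K)%N; last by exists (0, 0).
  by have [y [w enc]] := segment_encoding_exists (t_range Zz k_K); exists (y, w).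
by exists (fun k => (yw k).1), (fun k => (yw k).2).
Qed.

Lemma svec_mean_g z eta y w : encodes_segments z y w ->
  forall j, (1 <= j <= q.+2)%N ->
  svec q.+3 M K x r1 r2 r3 p h eta y w j = mean_g z j + Delta_comb eta j.
Proof.
move=> enc j j_q; rewrite /svec /mean_g /Delta_comb; congr (_ * _ + _).
by apply: eq_big_nat => k k_K; apply: (segment_encoding_gvec x_incr (enc k k_K) j_q).
Qed.

Lemma milp_feasibleE z lam eta y w :
  milp_feasible q.+3 M K x r1 r2 r3 p h Z xi z lam eta y w <->
  [/\ Z z, encodes_segments z y w
    & dual_feasible q.+1 V_coef (Rlin (mean_g z)) (dual_vars lam eta)].
Proof.
have range l : (1 <= l <= q.+1)%N -> (1 <= l <= q.+2)%N /\ (1 <= q.+2 <= q.+2)%N.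
  by case/andP=> l1 /leqW lq; rewrite l1 lq leqnn.
split=> [[s_eq [cons [sums [Zz [lam_ge0 eta_ge0]]]]]|[Zz enc]].
  have enc : encodes_segments z y w.
    by move=> k k_K; split=> [j|]; [exact: cons | exact: sums].
  split=> //; first by rewrite -in_setE.
  apply/dual_feasible_vars; split=> // l l_q.
  have [l_q' q_q] := range l l_q.
  by rewrite -(svec_mean_g _ enc l_q') -(svec_mean_g _ enc q_q); exact: s_eq.
move=> /dual_feasible_vars[coef lam_ge0 eta_ge0]; split=> [l l_q|].
  have [l_q' q_q] := range l l_q.
  by rewrite /= (svec_mean_g _ enc l_q') (svec_mean_g _ enc q_q); exact: coef.
split=> [k j k_K|]; first by case: (enc k k_K) => cons _; exact: cons.
split=> [k k_K|]; first by case: (enc k k_K).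
by rewrite in_setE.
Qed.

Lemma milp_obj_dual z lam eta y w : encodes_segments z y w ->
  milp_obj q.+3 M K x r1 r2 r3 p h lam eta y w =
  dual_obj V_const (mean_g z q.+2) (dual_vars lam eta).
Proof. by move=> enc; rewrite /milp_obj (svec_mean_g _ enc) ?leqnn // dual_obj_vars. Qed.

Lemma milp_value_dual : milp_value q.+3 M K x r1 r2 r3 p h Z xi = ereal_sup (dual_value @` Z).
Proof.
apply/eqP; rewrite eq_le; apply/andP; split.
  apply: ge_ereal_sup => _ [z [lam [eta [y [w [/milp_feasibleE[Zz enc feas] ->]]]]]].
  rewrite (milp_obj_dual _ _ enc); apply: le_ereal_sup_tmp.
  exists (dual_value z); first by exists z.
  by apply: ereal_sup_ubound; exists (dual_vars lam eta).
apply: ge_ereal_sup => _ [z Zz <-]; apply: ge_ereal_sup => _ [y feas <-].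
have [lam [eta y_eq]] := dual_vars_surj y; subst y.
have [yv [w enc]] := segment_encodings_exist Zz.
apply: ereal_sup_ubound; exists z, lam, eta, yv, w.
by rewrite (milp_obj_dual _ _ enc); split=> //; apply/milp_feasibleE.
Qed.
End PreferenceRobustLP.

Theorem proposition8 (R : realType) (N M K n : nat) (x : nat -> R)
  (r1 r2 r3 p h : nat -> R) (Z : set 'rV[R]_n) (xi : nat -> 'rV[R]_n) :
  (3 <= N)%N -> (1 <= M)%N -> (1 <= K)%N ->
  (forall i, (1 <= i < N)%N -> x i < x i.+1) ->
  (forall m, (1 <= m <= M)%N ->
     [/\ r1 m <= r3 m,
         x 1%N <= r1 m <= x N, x 1%N <= r2 m <= x N, x 1%N <= r3 m <= x N
       & 0 <= p m <= 1] /\ (h m = 1 \/ h m = -1)) ->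
  compact Z -> convex_rV Z ->
  (forall z k, Z z -> (1 <= k <= K)%N -> x 1%N <= rdot z (xi k) <= x N) ->
  pro_value N M K x r1 r2 r3 p h Z xi = milp_value N M K x r1 r2 r3 p h Z xi.
Proof.
case: N => [|[|[|q]]] // _ _ _ x_incr _ _ _ t_range.
by rewrite pro_value_dual milp_value_dual.
Qed.
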